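(* For $0<r_\varepsilon,r'_\varepsilon<1$ ($\varepsilon=+,-,0$) and $\mu_i,\mu'_i\in[0,2\pi)$ ($i=1,2,3$), let \begin{align*} U_{r,\mu}={}&|e_1^{-1}\rangle\langle r_0e_1^0+e^{i\mu_1}s_0e_2^0|+|e_2^{1}\rangle\langle -e^{i\mu_2}s_0e_1^0+e^{i(\mu_1+\mu_2)}r_0e_2^0|\\ &+\sum_{n\ge1}|e_1^{n-1}\rangle\langle r_+e_1^n+s_+e_2^n|+|e_2^{n+1}\rangle\langle -e^{i\mu_3}s_+e_1^n+e^{i\mu_3}r_+e_2^n|\\ &+\sum_{n\le-1}|e_1^{n-1}\rangle\langle r_-e_1^n+s_-e_2^n|+|e_2^{n+1}\rangle\langle -s_-e_1^n+r_-e_2^n|, \end{align*} with $s_\varepsilon=\sqrt{1-r_\varepsilon^2}$, where $r=(r_+,r_-,r_0)$, $\mu=(\mu_1,\mu_2,\mu_3)$, and define $U_{r',\mu'}$ analogously. Then $U_{r,\mu}$ and $U_{r',\mu'}$ are unitary equivalent if and only if $r=r'$ and $\mu=\mu'$.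
   Context: Let $\mathcal H_n=\mathbb C^2$ for $n\in\mathbb Z$, $\mathcal H=\bigoplus_{n\in\mathbb Z}\mathcal H_n$, and $\{e_1^n,e_2^n\}$ the standard basis of $\mathcal H_n$. Dirac notation: $|x\rangle\langle y|$ is the operator $z\mapsto\langle y,z\rangle x$ (inner product conjugate-linear in the first argument). Since a unitary $U$ and $e^{i\lambda}U$ are identified, unitaries $U_1,U_2$ on $\mathcal H$ are called unitary equivalent if there exist $\lambda\in\mathbb R$ and a unitary $W=\bigoplus_nW_n$ ($W_n$ unitary on $\mathcal H_n$) with $e^{i\lambda}WU_1W^*=U_2$. *)

From mathcomp Require Import all_boot all_algebra.
From mathcomp Require Import reals complex Rstruct.
From Stdlib Require Import Rdefinitions Rtrigo_def Rtrigo1 R_sqrt.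
Set Implicit Arguments. Unset Strict Implicit. Unset Printing Implicit Defensive.
Import GRing.Theory Num.Theory.
Local Open Scope ring_scope.

Notation RR := Rdefinitions.R.
Notation CC := (RR[i]).

Definition expi (x : RR) : CC := Complex (Rtrigo_def.cos x) (Rtrigo_def.sin x).

Definition sC (r : RR) : CC := Complex (R_sqrt.sqrt (1 - r ^+ 2)) 0.
Definition rC (r : RR) : CC := Complex r 0.

(* The Hilbert space H = (+)_{n in Z} C^2 with orthonormal basis e_a^n,
   n : int, a : 'I_2 (a = 0 stands for e_1, a = 1 for e_2).
   A vector of H_n is represented by its coordinate row vector in C^2. *)
Definition vec2 (x y : CC) : 'rV[CC]_2 := \row_(j < 2) (if j == 0 then x else y).

Section Umat.
Variables (r : RR * RR * RR) (mu : RR * RR * RR).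
Let rp := r.1.1. Let rm := r.1.2. Let r0 := r.2.
Let mu1 := mu.1.1. Let mu2 := mu.1.2. Let mu3 := mu.2.

(* bra vector y1(n) in H_n of the term |e_1^{n-1}><y1(n)| *)
Definition bra1 (n : int) : 'rV[CC]_2 :=
  if n == 0 then vec2 (rC r0) (expi mu1 * sC r0)
  else if 0 < n then vec2 (rC rp) (sC rp)
  else vec2 (rC rm) (sC rm).

(* bra vector y2(n) in H_n of the term |e_2^{n+1}><y2(n)| *)
Definition bra2 (n : int) : 'rV[CC]_2 :=
  if n == 0 then vec2 (- (expi mu2 * sC r0)) (expi (mu1 + mu2) * rC r0)
  else if 0 < n then vec2 (- (expi mu3 * sC rp)) (expi mu3 * rC rp)
  else vec2 (- sC rm) (rC rm).

(* Matrix entries <e_a^m, U_{r,mu} e_b^n> of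
   U_{r,mu} = sum_n |e_1^{n-1}><bra1 n| + |e_2^{n+1}><bra2 n|,
   with |x><y| z = <y,z> x and the inner product conjugate-linear in the
   first argument, so <y, e_b^n> = conj (y_b). *)
Definition Uent (m : int) (a : 'I_2) (n : int) (b : 'I_2) : CC :=
  (if (m == n - 1) && (a == 0) then conjc (bra1 n 0 b) else 0)
  + (if (m == n + 1) && (a == 1) then conjc (bra2 n 0 b) else 0).
End Umat.

Definition adj2 (A : 'M[CC]_2) : 'M[CC]_2 := (map_mx conjc A)^T.

Definition unitary2 (A : 'M[CC]_2) : Prop :=
  adj2 A *m A = 1%:M /\ A *m adj2 A = 1%:M.

(* Matrix entries <e_a^m, W U W^* e_b^n> for W = (+)_n W_n block diagonal,
   W_n acting on H_n by W_n e_d^n = sum_a (W_n a d) e_a^n. *)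
Definition conj_ent (W : int -> 'M[CC]_2)
  (U : int -> 'I_2 -> int -> 'I_2 -> CC) (m : int) (a : 'I_2) (n : int) (b : 'I_2) : CC :=
  \sum_(c < 2) \sum_(d < 2) W m a c * U m c n d * conjc (W n b d).

Definition unitary_equiv (U1 U2 : int -> 'I_2 -> int -> 'I_2 -> CC) : Prop :=
  exists (lam : RR) (W : int -> 'M[CC]_2),
    (forall n, unitary2 (W n)) /\
    (forall m a n b, expi lam * conj_ent W U1 m a n b = U2 m a n b).

(* In W U W^*, the block from H_n to H_(n-1) (resp. H_(n+1)) is W_(n-1)
   (resp. W_(n+1)) times the rank-one block of U times W_n^*.  Since U never
   reaches e_2^(n-1) or e_1^(n+1) while every bra vector is non-zero, unitarity
   forces each W_n to be diagonal, W_n = diag(w_n, v_n) with |w_n| = |v_n| = 1.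
   Put E = e^(i lambda).  Comparing the coefficients that are positive reals
   (r_eps, and s_eps away from the exceptional sites) gives r = r' together with
   the phase relations w_n = E w_(n-1), v_n = E w_(n-1) for n <> 0 and
   w_n = E v_(n+1) for n < 0; at n = -2 they force E^2 = 1.  With these relations
   the phases picked up by the remaining coefficients cancel, so
   e^(i mu_j) = e^(i mu'_j), and mu_j = mu'_j as both lie in [0, 2 pi). *)

From mathcomp Require Import all_boot all_order all_algebra.
From mathcomp Require Import reals complex Rstruct.
From Stdlib Require Import Reals Lra.
From mathcomp Require Import ring.
Set Implicit Arguments. Unset Strict Implicit. Unset Printing Implicit Defensive.
Import Order.TTheory GRing.Theory Num.Theory.
Local Open Scope ring_scope.

Lemma sum_ord2 (V : nmodType) (F : 'I_2 -> V) : \sum_(i < 2) F i = F 0 + F 1.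
Proof. by rewrite big_ord_recl big_ord1; congr (_ + F _); apply: val_inj. Qed.

Lemma ord2_cases (a : 'I_2) : a = 0 \/ a = 1.
Proof. by case: a => [[|[|//]] ?]; [left | right]; apply: val_inj. Qed.

Lemma vec2_0 (x y : CC) : vec2 x y 0 0 = x. Proof. by rewrite mxE. Qed.
Lemma vec2_1 (x y : CC) : vec2 x y 0 1 = y. Proof. by rewrite mxE. Qed.

Lemma conjcM (x y : CC) : conjc (x * y) = conjc x * conjc y.
Proof. exact: rmorphM. Qed.

Lemma norm_expi x : `|expi x| = 1.
Proof.
apply/eqP; rewrite -sqrp_eq1 // sqr_normc /expi /=; apply/eqP.
simpc; rewrite [sin x * cos x]mulrC addNr.
by have := sin2_cos2 x; rewrite /Rsqr RplusE !RmultE addrC => ->.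
Qed.

Lemma expi_neq0 x : expi x != 0.
Proof. by rewrite -normr_eq0 norm_expi oner_neq0. Qed.

Lemma norm1_mulcJ (p : CC) : `|p| = 1 -> p * conjc p = 1.
Proof. by move=> p1; rewrite -sqr_normc p1 expr1n. Qed.

Lemma norm1_conj_mul_eq1 (p q : CC) : `|p| = 1 -> conjc p * q = 1 -> q = p.
Proof. by move=> p1 pq1; rewrite -[q]mul1r -(norm1_mulcJ p1) -mulrA pq1 mulr1. Qed.

Lemma norm1_pos_scale_eq1 (u x y : CC) :
  `|u| = 1 -> 0 < x -> 0 < y -> u * x = y -> u = 1.
Proof.
move=> u1 x_gt0 y_gt0 uxy.
have u_gt0 : 0 < u by rewrite -(pmulr_lgt0 _ x_gt0) uxy.
by rewrite -(gtr0_norm u_gt0).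
Qed.

Lemma norm1_eq_of_conj_mul_pos (p q x y : CC) : `|p| = 1 -> `|q| = 1 -> 0 < x -> 0 < y ->
  conjc p * q * x = y -> q = p.
Proof.
move=> p1 q1 x_gt0 y_gt0 pqxy; apply: (norm1_conj_mul_eq1 p1).
by apply: norm1_pos_scale_eq1 x_gt0 y_gt0 pqxy; rewrite normrM normcJ p1 q1 mulr1.
Qed.

Lemma rC_gt0 x : (0 < rC x) = (0 < x).
Proof. by rewrite ltcE /= eqxx. Qed.

Lemma sC_gt0 x : 0 < x < 1 -> 0 < sC x.
Proof.
case/andP=> x_gt0 x_lt1; rewrite ltcE /= eqxx RsqrtE sqrtr_gt0 subr_gt0 expr2.
by rewrite mulr_ilt1 // ltW.
Qed.

Lemma expi_inj (a b : RR) : 0 <= a < 2 * PI -> 0 <= b < 2 * PI -> expi a = expi b -> a = b.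
Proof.
wlog le_ba : a b / b <= a.
  move=> hwlog ha hb eab; have [le|/ltW le] := leP b a; first exact: hwlog.
  by apply/esym/hwlog.
move=> /andP[_ a_lt] /andP[b_ge0 _] [cos_ab sin_ab].
have {}a_lt : (a < 2 * PI)%R by exact/RltP.
have {}b_ge0 : (0 <= b)%R by exact/RleP.
have {}le_ba : (b <= a)%R by exact/RleP.
have sin_d : sin (a - b)%R = 0%R by rewrite sin_minus cos_ab sin_ab; lra.
have cos_d : cos (a - b)%R = 1%R.
  by rewrite cos_minus cos_ab sin_ab -(sin2_cos2 b) /Rsqr; lra.
have [d0|[dPI|d2PI]] := sin_eq_O_2PI_0 (a - b)%R ltac:(lra) ltac:(lra) sin_d.
- lra.
- by rewrite dPI cos_PI in cos_d; lra.
- lra.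
Qed.

Lemma unitary2_mulmx_eq0 (V : 'M[CC]_2) (x : 'cV[CC]_2) :
  unitary2 V -> V *m x = 0 -> x = 0.
Proof. by case=> VV _ Vx0; rewrite -[x]mul1mx -VV -mulmxA Vx0 mulmx0. Qed.

Lemma unitary2_diag_norm (V : 'M[CC]_2) (a : 'I_2) :
  unitary2 V -> V 0 1 = 0 -> V 1 0 = 0 -> `|V a a| = 1.
Proof.
case=> /matrixP/(_ a a) VV _ V01 V10; apply/eqP; rewrite -sqrp_eq1 // sqr_normc.
move: VV; rewrite !mxE sum_ord2 !mxE eqxx.
by case: (ord2_cases a) => ->; rewrite ?V01 ?V10 conjc0 mul0r ?addr0 ?add0r mulrC => ->.
Qed.

Lemma mulmx_diag2 (R : pzSemiRingType) (V : 'M[R]_2) (x : 'cV[R]_2) (b : 'I_2) :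
  V 0 1 = 0 -> V 1 0 = 0 -> (V *m x) b 0 = V b b * x b 0.
Proof.
move=> V01 V10; rewrite mxE sum_ord2.
by case: (ord2_cases b) => ->; rewrite ?V01 ?V10 mul0r ?addr0 ?add0r.
Qed.

Lemma unitary_equiv_refl (U : int -> 'I_2 -> int -> 'I_2 -> CC) : unitary_equiv U U.
Proof.
exists 0, (fun=> 1%:M); split=> [n | m a n b].
  have adj1 : adj2 1%:M = 1%:M.
    by apply/matrixP => i j; rewrite !mxE eq_sym conjc_nat.
  by rewrite /unitary2 adj1 mulmx1.
rewrite /expi cos_0 sin_0 mul1r /conj_ent !sum_ord2 !mxE.
by case: (ord2_cases a) => ->; case: (ord2_cases b) => ->; rewrite !conjc_nat /=; ring.
Qed.

Definition admissible (r : RR * RR * RR) : Prop :=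
  [/\ 0 < r.1.1 < 1, 0 < r.1.2 < 1 & 0 < r.2 < 1].

Section Bra.
Variables (r mu : RR * RR * RR).

Lemma bra1_pos (n : int) : 0 < n -> bra1 r mu n = vec2 (rC r.1.1) (sC r.1.1).
Proof. by move=> n_gt0; rewrite /bra1 n_gt0 gt_eqF. Qed.

Lemma bra1_neg (n : int) : n < 0 -> bra1 r mu n = vec2 (rC r.1.2) (sC r.1.2).
Proof. by move=> n_lt0; rewrite /bra1 lt_eqF // lt_gtF. Qed.

Lemma bra1_zero : bra1 r mu 0 = vec2 (rC r.2) (expi mu.1.1 * sC r.2).
Proof. by []. Qed.

Lemma bra2_pos (n : int) :
  0 < n -> bra2 r mu n = vec2 (- (expi mu.2 * sC r.1.1)) (expi mu.2 * rC r.1.1).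
Proof. by move=> n_gt0; rewrite /bra2 n_gt0 gt_eqF. Qed.

Lemma bra2_neg (n : int) : n < 0 -> bra2 r mu n = vec2 (- sC r.1.2) (rC r.1.2).
Proof. by move=> n_lt0; rewrite /bra2 lt_eqF // lt_gtF. Qed.

Lemma bra2_zero :
  bra2 r mu 0 = vec2 (- (expi mu.1.2 * sC r.2)) (expi (mu.1.1 + mu.1.2) * rC r.2).
Proof. by []. Qed.

Hypothesis r_adm : admissible r.

Lemma bra1_00_gt0 (n : int) : 0 < bra1 r mu n 0 0.
Proof.
case: r_adm => /andP[rp_gt0 _] /andP[rm_gt0 _] /andP[r0_gt0 _].
have [n_lt0|n_gt0|->] := ltrgtP n 0.
- by rewrite bra1_neg // vec2_0 rC_gt0.
- by rewrite bra1_pos // vec2_0 rC_gt0.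
- by rewrite bra1_zero vec2_0 rC_gt0.
Qed.

Lemma bra1_01_gt0 (n : int) : n != 0 -> 0 < bra1 r mu n 0 1.
Proof.
case: r_adm => rp rm _; have [n_lt0|n_gt0|//] := ltrgtP n 0.
- by rewrite bra1_neg // vec2_1 sC_gt0.
- by rewrite bra1_pos // vec2_1 sC_gt0.
Qed.

Lemma bra2_00_lt0 (n : int) : n < 0 -> bra2 r mu n 0 0 < 0.
Proof. by case: r_adm => _ rm _ n_lt0; rewrite bra2_neg // vec2_0 oppr_lt0 sC_gt0. Qed.

Lemma bra1_neq0 (n : int) : bra1 r mu n != 0.
Proof. by apply: contraTneq (bra1_00_gt0 n) => ->; rewrite mxE ltxx. Qed.

Lemma bra2_neq0 (n : int) : bra2 r mu n != 0.
Proof.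
case: r_adm => /andP[rp_gt0 _] /andP[rm_gt0 _] /andP[r0_gt0 _].
have rC_neq0 x : 0 < x -> rC x != 0 by rewrite -rC_gt0 => /gt_eqF ->.
apply/negP => /eqP/matrixP/(_ 0 1); rewrite mxE; apply/eqP.
have [n_lt0|n_gt0|->] := ltrgtP n 0.
- by rewrite bra2_neg // vec2_1 rC_neq0.
- by rewrite bra2_pos // vec2_1 mulf_neq0 ?expi_neq0 ?rC_neq0.
- by rewrite bra2_zero vec2_1 mulf_neq0 ?expi_neq0 ?rC_neq0.
Qed.

End Bra.

Lemma Uent_up r mu (n : int) a b :
  Uent r mu (n - 1) a n b = if a == 0 then conjc (bra1 r mu n 0 b) else 0.
Proof. by rewrite /Uent eqxx (inj_eq (addrI n)) /= addr0. Qed.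

Lemma Uent_down r mu (n : int) a b :
  Uent r mu (n + 1) a n b = if a == 1 then conjc (bra2 r mu n 0 b) else 0.
Proof. by rewrite /Uent eqxx (inj_eq (addrI n)) /= add0r. Qed.

Lemma conj_ent_Uent_up W r mu (n : int) a b :
  conj_ent W (Uent r mu) (n - 1) a n b = W (n - 1) a 0 * conjc ((W n *m (bra1 r mu n)^T) b 0).
Proof.
by rewrite /conj_ent !sum_ord2 !Uent_up !mxE sum_ord2 !mxE rmorphD !rmorphM /=; ring.
Qed.

Lemma conj_ent_Uent_down W r mu (n : int) a b :
  conj_ent W (Uent r mu) (n + 1) a n b = W (n + 1) a 1 * conjc ((W n *m (bra2 r mu n)^T) b 0).
Proof.
by rewrite /conj_ent !sum_ord2 !Uent_down !mxE sum_ord2 !mxE rmorphD !rmorphM /=; ring.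
Qed.

Section Equivalence.
Variables (r mu r' mu' : RR * RR * RR) (lam : RR) (W : int -> 'M[CC]_2).
Hypotheses (r_adm : admissible r) (r'_adm : admissible r').
Hypothesis W_unitary : forall n, unitary2 (W n).
Hypothesis WUW : forall m a n b,
  expi lam * conj_ent W (Uent r mu) m a n b = Uent r' mu' m a n b.

Local Notation E := (expi lam).
Local Notation w n := (W n 0 0).
Local Notation v n := (W n 1 1).

Lemma W_lower_eq0 (m : int) : W m 1 0 = 0.
Proof.
rewrite -[m](addrK 1); set n := m + 1.
have := bra1_neq0 mu r_adm n; apply: contraNeq => W_neq0.
rewrite -trmx_eq0; apply/eqP/(unitary2_mulmx_eq0 (W_unitary n)).
apply/matrixP => b i; rewrite ord1 [RHS]mxE; apply/eqP.
have := WUW (n - 1) 1 n b; rewrite conj_ent_Uent_up Uent_up /=.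
by move/eqP; rewrite !mulf_eq0 (negbTE W_neq0) (negbTE (expi_neq0 _)) conjc_eq0.
Qed.

Lemma W_upper_eq0 (m : int) : W m 0 1 = 0.
Proof.
rewrite -[m](subrK 1); set n := m - 1.
have := bra2_neq0 mu r_adm n; apply: contraNeq => W_neq0.
rewrite -trmx_eq0; apply/eqP/(unitary2_mulmx_eq0 (W_unitary n)).
apply/matrixP => b i; rewrite ord1 [RHS]mxE; apply/eqP.
have := WUW (n + 1) 0 n b; rewrite conj_ent_Uent_down Uent_down /=.
by move/eqP; rewrite !mulf_eq0 (negbTE W_neq0) (negbTE (expi_neq0 _)) conjc_eq0.
Qed.

Lemma W_diag_norm (n : int) (a : 'I_2) : `|W n a a| = 1.
Proof. exact: unitary2_diag_norm (W_unitary n) (W_upper_eq0 n) (W_lower_eq0 n). Qed.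

Lemma bra1_phase (n : int) b :
  conjc (E * w (n - 1)) * W n b b * bra1 r mu n 0 b = bra1 r' mu' n 0 b.
Proof.
have := congr1 conjc (WUW (n - 1) 0 n b).
rewrite conj_ent_Uent_up Uent_up mulmx_diag2 ?W_upper_eq0 ?W_lower_eq0 // !mxE.
by rewrite eqxx !conjcM !conjcK => <-; ring.
Qed.

Lemma bra2_phase (n : int) b :
  conjc (E * v (n + 1)) * W n b b * bra2 r mu n 0 b = bra2 r' mu' n 0 b.
Proof.
have := congr1 conjc (WUW (n + 1) 1 n b).
rewrite conj_ent_Uent_down Uent_down mulmx_diag2 ?W_upper_eq0 ?W_lower_eq0 // !mxE.
by rewrite eqxx !conjcM !conjcK => <-; ring.
Qed.

Lemma norm_E_W (n : int) a : `|E * W n a a| = 1.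
Proof. by rewrite normrM norm_expi W_diag_norm mulr1. Qed.

Lemma w_succ (n : int) : w n = E * w (n - 1).
Proof.
exact: norm1_eq_of_conj_mul_pos (norm_E_W _ _) (W_diag_norm _ _)
  (bra1_00_gt0 _ r_adm _) (bra1_00_gt0 _ r'_adm _) (bra1_phase n 0).
Qed.

Lemma v_succ (n : int) : n != 0 -> v n = E * w (n - 1).
Proof.
move=> n_neq0; exact: norm1_eq_of_conj_mul_pos (norm_E_W _ _) (W_diag_norm _ _)
  (bra1_01_gt0 _ r_adm n_neq0) (bra1_01_gt0 _ r'_adm n_neq0) (bra1_phase n 1).
Qed.

Lemma w_neg (n : int) : n < 0 -> w n = E * v (n + 1).
Proof.
move=> n_lt0.
apply: (@norm1_eq_of_conj_mul_pos _ _ (- bra2 r mu n 0 0) (- bra2 r' mu' n 0 0)).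
- exact: norm_E_W.
- exact: W_diag_norm.
- by rewrite oppr_gt0 bra2_00_lt0.
- by rewrite oppr_gt0 bra2_00_lt0.
- by rewrite mulrN bra2_phase.
Qed.

Lemma E_sqr : E * E = 1.
Proof.
have w_neq0 : w (-2) != 0 by rewrite -normr_eq0 W_diag_norm oner_neq0.
apply: (mulIf w_neq0); rewrite mul1r -mulrA.
have -> : E * w (-2) = v (-1) by rewrite v_succ.
by rewrite [RHS]w_neg.
Qed.

Lemma bra1_eq (n : int) b :
  W n b b = E * w (n - 1) -> bra1 r mu n 0 b = bra1 r' mu' n 0 b.
Proof.
move=> Wbb; rewrite -bra1_phase Wbb -[LHS]mul1r; congr (_ * _).
by rewrite [RHS]mulrC norm1_mulcJ ?norm_E_W.
Qed.

Lemma bra2_eq (n : int) b :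
  W n b b = E * v (n + 1) -> bra2 r mu n 0 b = bra2 r' mu' n 0 b.
Proof.
move=> Wbb; rewrite -bra2_phase Wbb -[LHS]mul1r; congr (_ * _).
by rewrite [RHS]mulrC norm1_mulcJ ?norm_E_W.
Qed.

Lemma unitary_equiv_r_eq : r = r'.
Proof.
have coord0 n : bra1 r mu n 0 0 = bra1 r' mu' n 0 0 by apply/bra1_eq/w_succ.
have [rp] : rC r.1.1 = rC r'.1.1 by move: (coord0 1); rewrite !bra1_pos // !vec2_0.
have [rm] : rC r.1.2 = rC r'.1.2 by move: (coord0 (-1)); rewrite !bra1_neg // !vec2_0.
have [r0] : rC r.2 = rC r'.2 by move: (coord0 0); rewrite !bra1_zero !vec2_0.
by apply: injective_projections => //; apply: injective_projections.
Qed.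

Lemma unitary_equiv_expi_mu_eq :
  [/\ expi mu.1.1 = expi mu'.1.1, expi mu.1.2 = expi mu'.1.2 & expi mu.2 = expi mu'.2].
Proof.
have E_twice x : x = E * (E * x) by rewrite mulrA E_sqr mul1r.
have e1 : bra1 r mu 0 0 1 = bra1 r' mu' 0 0 1.
  by apply: bra1_eq; rewrite sub0r w_neg // addNr -E_twice.
have e2 : bra2 r mu 0 0 0 = bra2 r' mu' 0 0 0.
  by apply: bra2_eq; rewrite add0r v_succ // subrr -E_twice.
have e3 : bra2 r mu 1 0 0 = bra2 r' mu' 1 0 0.
  by apply: bra2_eq; rewrite v_succ // addrK -E_twice.
move: e1 e2 e3; rewrite !bra1_zero !bra2_zero !bra2_pos // !vec2_0 !vec2_1.
rewrite -unitary_equiv_r_eq; case: r_adm => /sC_gt0/lt0r_neq0 sp _ /sC_gt0/lt0r_neq0 s0.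
by move=> /(mulIf s0) e1 /oppr_inj/(mulIf s0) e2 /oppr_inj/(mulIf sp) e3.
Qed.

End Equivalence.

Theorem theorem2p8 (r r' mu mu' : RR * RR * RR) :
  (0 < r.1.1 < 1) -> (0 < r.1.2 < 1) -> (0 < r.2 < 1) ->
  (0 < r'.1.1 < 1) -> (0 < r'.1.2 < 1) -> (0 < r'.2 < 1) ->
  (0 <= mu.1.1 < 2 * PI) -> (0 <= mu.1.2 < 2 * PI) -> (0 <= mu.2 < 2 * PI) ->
  (0 <= mu'.1.1 < 2 * PI) -> (0 <= mu'.1.2 < 2 * PI) -> (0 <= mu'.2 < 2 * PI) ->
  (unitary_equiv (Uent r mu) (Uent r' mu') <-> (r = r' /\ mu = mu')).
Proof.
move=> rp rm r0 rp' rm' r0' mu1 mu2 mu3 mu1' mu2' mu3'.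
split=> [[lam [W [W_unitary WUW]]] | [<- <-]]; last exact: unitary_equiv_refl.
have r_adm : admissible r by split.
have r'_adm : admissible r' by split.
have [e1 e2 e3] := unitary_equiv_expi_mu_eq r_adm r'_adm W_unitary WUW.
split; first exact: unitary_equiv_r_eq r_adm r'_adm W_unitary WUW.
apply: injective_projections; first apply: injective_projections.
- exact: expi_inj e1.
- exact: expi_inj e2.
- exact: expi_inj e3.
Qed.
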